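(* Let $r<\min\{m,n\}$ and $\mathcal{M}_\mathbb{C}=\{X\in\mathbb{C}^{m\times n}:\operatorname{rank}_\mathbb{C}X\le r\}$. There is a Zariski-open dense set $\mathcal{U}_3\subset\mathcal{M}_\mathbb{C}$ such that for every $X=[x_1\cdots x_n]\in\mathcal{U}_3$, every $j\in[n]$, every set $\mathcal{J}=\{j_1,\dots,j_r\}\subseteq[n]$ of $r$ distinct indices with $j\notin\mathcal{J}$, and every $\Pi_1,\dots,\Pi_r\in\mathcal{P}_m$ not all equal to $I_m$, we have $\operatorname{rank}[x_j\ \Pi_1x_{j_1}\ \cdots\ \Pi_rx_{j_r}]=r+1$.
   Context: $\mathcal{P}_m$ is the set of $m\times m$ permutation matrices, $I_m$ the identity. $\mathcal{M}_\mathbb{C}$ carries the Zariski topology. *)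

From mathcomp Require Import all_boot all_algebra all_fingroup.
From mathcomp Require Import reals.
From mathcomp.real_closed Require Import complex.
From mathcomp Require Import mpoly.
Set Implicit Arguments. Unset Strict Implicit. Unset Printing Implicit Defensive.
Import GRing.Theory Num.Theory.
Local Open Scope ring_scope.

(* Zariski topology on m x n complex matrices: a matrix X is identified with
   the point of C^(m*n) given by its entries, listed via mxvec. *)
Definition mx_eval (C : comRingType) (m n : nat) (p : {mpoly C[m * n]})
  (X : 'M[C]_(m, n)) : C := p.@[fun k => mxvec X 0 k].

Definition zlocus (C : comRingType) (m n : nat) (S : {mpoly C[m * n]} -> Prop)
  : 'M[C]_(m, n) -> Prop := fun X => forall p, S p -> mx_eval p X = 0.

Definition zopen_in (C : comRingType) (m n : nat) (M U : 'M[C]_(m, n) -> Prop) :=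
  exists S : {mpoly C[m * n]} -> Prop,
    forall X, U X <-> (M X /\ ~ zlocus S X).

(* U is dense in M for the (subspace) Zariski topology: every Zariski-closed
   subset M /\ Z(S) of M that contains U is all of M. *)
Definition zdense_in (C : comRingType) (m n : nat) (M U : 'M[C]_(m, n) -> Prop) :=
  forall S : {mpoly C[m * n]} -> Prop,
    (forall X, U X -> zlocus S X) -> forall X, M X -> zlocus S X.

Definition lemma3_mx (C : comRingType) (m n r : nat) (X : 'M[C]_(m, n))
  (j : 'I_n) (jj : 'I_r -> 'I_n) (s : 'I_r -> 'S_m) : 'M[C]_(m, 1 + r) :=
  row_mx (col j X) (\matrix_(i < m, k < r) (perm_mx (s k) *m col (jj k) X) i 0).

From mathcomp Require Import all_boot all_algebra all_fingroup.
From mathcomp Require Import reals.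
From mathcomp.real_closed Require Import complex.
From mathcomp Require Import mpoly.
Import GRing.Theory Num.Theory.
Local Open Scope ring_scope.
Set Implicit Arguments. Unset Strict Implicit.

(* For admissible index data t = (j, jj, s) let
   g_t(X) = det(Y^T Y) with Y = [x_j  Pi_1 x_{j_1} ... Pi_r x_{j_r}]; g_t(X) != 0
   forces rank Y = r + 1 (gram_det_rank).  We take U = {X in M | F X != 0} with
   F the product of the finitely many g_t.  Density and nonemptiness come
   from the irreducibility of the determinantal variety M, used in the
   elementary form "any two points of M lie on a polynomial curve inside M"
   (rank_le_curve_connected: factor X = A B and interpolate the factors).
   Restricting to such curves reduces everything to univariate polynomials
   over an infinite field: a product of polynomial functions each nonzero
   somewhere on M is nonzero somewhere on M, and a nonempty basic open subset
   of M is dense in M.  Finally each g_t is nonzero at an explicit rank-r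
   matrix for which Y consists of distinct standard basis vectors, so that
   Y^T Y = 1 (gram_lemma3_witness). *)

Section PolynomialFunctions.
Variables (C : comNzRingType) (m n : nat).
Implicit Types F G : 'M[C]_(m, n) -> C.

Definition poly_fun F := exists p : {mpoly C[m * n]}, forall X, mx_eval p X = F X.

Lemma poly_fun_ext F G : poly_fun F -> F =1 G -> poly_fun G.
Proof. by move=> [p Fp] FG; exists p => X; rewrite Fp FG. Qed.

Lemma poly_fun_const c : poly_fun (fun=> c).
Proof. by exists c%:MP => X; rewrite /mx_eval mevalC. Qed.

Lemma poly_fun_entry i j : poly_fun (fun X => X i j).
Proof. by exists 'X_(mxvec_index i j) => X; rewrite /mx_eval mevalXU mxvecE. Qed.

Lemma poly_fun_add F G : poly_fun F -> poly_fun G -> poly_fun (fun X => F X + G X).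
Proof.
by move=> [p Fp] [q Gq]; exists (p + q) => X; rewrite /mx_eval mevalD -!/(mx_eval _ _) Fp Gq.
Qed.

Lemma poly_fun_mul F G : poly_fun F -> poly_fun G -> poly_fun (fun X => F X * G X).
Proof.
by move=> [p Fp] [q Gq]; exists (p * q) => X; rewrite /mx_eval mevalM -!/(mx_eval _ _) Fp Gq.
Qed.

Lemma poly_fun_sum (I : Type) (s : seq I) (P : pred I) (F : I -> 'M[C]_(m, n) -> C) :
  (forall i, poly_fun (F i)) -> poly_fun (fun X => \sum_(i <- s | P i) F i X).
Proof.
move=> polyF; elim: s => [|i s IH].
  by apply: poly_fun_ext (poly_fun_const 0) _ => X; rewrite big_nil.
case Pi: (P i); last by apply: poly_fun_ext IH _ => X; rewrite big_cons Pi.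
by apply: poly_fun_ext (poly_fun_add (polyF i) IH) _ => X; rewrite big_cons Pi.
Qed.

Lemma poly_fun_prod (I : Type) (s : seq I) (P : pred I) (F : I -> 'M[C]_(m, n) -> C) :
  (forall i, poly_fun (F i)) -> poly_fun (fun X => \prod_(i <- s | P i) F i X).
Proof.
move=> polyF; elim: s => [|i s IH].
  by apply: poly_fun_ext (poly_fun_const 1) _ => X; rewrite big_nil.
case Pi: (P i); last by apply: poly_fun_ext IH _ => X; rewrite big_cons Pi.
by apply: poly_fun_ext (poly_fun_mul (polyF i) IH) _ => X; rewrite big_cons Pi.
Qed.

Definition poly_mx p q (F : 'M[C]_(m, n) -> 'M[C]_(p, q)) :=
  forall i j, poly_fun (fun X => F X i j).

Lemma poly_mx_tr p q (F : 'M[C]_(m, n) -> 'M[C]_(p, q)) :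
  poly_mx F -> poly_mx (fun X => (F X)^T).
Proof. by move=> polyF i j; apply: poly_fun_ext (polyF j i) _ => X; rewrite mxE. Qed.

Lemma poly_mx_mul p q l (F : 'M[C]_(m, n) -> 'M[C]_(p, q)) (G : 'M[C]_(m, n) -> 'M[C]_(q, l)) :
  poly_mx F -> poly_mx G -> poly_mx (fun X => F X *m G X).
Proof.
move=> polyF polyG i j; apply: (poly_fun_ext (F := fun X => \sum_k F X i k * G X k j)).
  by apply: poly_fun_sum => k; apply: poly_fun_mul.
by move=> X; rewrite mxE.
Qed.

Lemma poly_fun_det k (F : 'M[C]_(m, n) -> 'M[C]_k) :
  poly_mx F -> poly_fun (fun X => \det (F X)).
Proof.
move=> polyF; apply: poly_fun_sum => sg; apply: poly_fun_mul; first exact: poly_fun_const.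
by apply: poly_fun_prod => i; apply: polyF.
Qed.

Lemma poly_fun_on_curve F (Ct : 'M[{poly C}]_(m, n)) :
  poly_fun F -> exists g : {poly C}, forall t, F (map_mx (horner_eval t) Ct) = g.[t].
Proof.
move=> [p Fp]; exists (mmap (@polyC C) (fun k => mxvec Ct 0 k) p) => t.
rewrite -Fp /mx_eval mevalE -horner_evalE /mmap rmorph_sum; apply: eq_bigr => mu _.
rewrite rmorphM /= horner_evalE hornerC /mmap1 rmorph_prod; congr (_ * _).
by apply: eq_bigr => k _; rewrite rmorphXn /= -map_mxvec mxE.
Qed.

End PolynomialFunctions.

(* Over a field of characteristic zero a nonzero polynomial has a non-root
   among 0, 1, ..., deg. *)
Lemma poly_neq0_point (C : numDomainType) (g : {poly C}) :
  g != 0 -> exists t, g.[t] != 0.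
Proof.
move=> g_neq0; pose rs := [seq i%:R : C | i <- iota 0 (size g)].
have rs_uniq : uniq rs.
  by rewrite map_inj_uniq ?iota_uniq // => a b /eqP; rewrite eqr_nat => /eqP.
have : ~~ all (root g) rs.
  apply: contra g_neq0 => g_rs; apply/eqP/(roots_geq_poly_eq0 g_rs rs_uniq).
  by rewrite size_map size_iota.
by case/allPn => t _ gt_neq0; exists t.
Qed.

(* M is joined by polynomial curves: any two of its points are the values at 0
   and 1 of a polynomial curve staying inside M.  This is the elementary form
   of irreducibility used below. *)
Definition curve_connected (C : comNzRingType) m n (M : 'M[C]_(m, n) -> Prop) :=
  forall X Y, M X -> M Y -> exists Ct : 'M[{poly C}]_(m, n),
    [/\ map_mx (horner_eval 0) Ct = X, map_mx (horner_eval 1) Ct = Y &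
        forall t, M (map_mx (horner_eval t) Ct)].

Section CurveConnected.
Variables (C : numDomainType) (m n : nat) (M : 'M[C]_(m, n) -> Prop).
Hypothesis M_curves : curve_connected M.

Lemma curve_connected_prod_neq0 (X0 : 'M[C]_(m, n)) (I : Type) (s : seq I) (P : pred I)
    (F : I -> 'M[C]_(m, n) -> C) :
  M X0 -> (forall i, poly_fun (F i)) -> (forall i, P i -> exists X, M X /\ F i X != 0) ->
  exists X, M X /\ \prod_(i <- s | P i) F i X != 0.
Proof.
move=> MX0 polyF F_somewhere; elim: s => [|i s [Y [MY FY]]].
  by exists X0; rewrite big_nil oner_neq0.
case Pi: (P i); last by exists Y; rewrite big_cons Pi.
have [Z [MZ FiZ]] := F_somewhere i Pi.
have [Ct [Ct0 Ct1 MCt]] := M_curves MY MZ.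
have [g Hg] := poly_fun_on_curve Ct (poly_fun_prod s P polyF).
have [h Hh] := poly_fun_on_curve Ct (polyF i).
have g_neq0 : g != 0 by apply: contraNneq FY => g0; rewrite -Ct0 Hg g0 horner0.
have h_neq0 : h != 0 by apply: contraNneq FiZ => h0; rewrite -Ct1 Hh h0 horner0.
have [t hgt] := poly_neq0_point (mulf_neq0 h_neq0 g_neq0).
by exists (map_mx (horner_eval t) Ct); rewrite big_cons Pi Hg Hh -hornerM.
Qed.

Lemma curve_connected_vanish (F : 'M[C]_(m, n) -> C) (p : {mpoly C[m * n]}) X0 :
  poly_fun F -> M X0 -> F X0 != 0 ->
  (forall X, M X -> F X != 0 -> mx_eval p X = 0) -> forall X, M X -> mx_eval p X = 0.
Proof.
move=> polyF MX0 FX0 p_vanish X MX.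
have [Ct [Ct0 Ct1 MCt]] := M_curves MX MX0.
have [f Hf] := poly_fun_on_curve Ct polyF.
have polyp : poly_fun (mx_eval p) by exists p.
have [g Hg] := poly_fun_on_curve Ct polyp.
have f_neq0 : f != 0 by apply: contraNneq FX0 => f0; rewrite -Ct1 Hf f0 horner0.
have gf0 : g * f = 0.
  apply/eqP; apply: contraT => /poly_neq0_point [t]; rewrite hornerM.
  have [ft0|ft_neq0] := eqVneq f.[t] 0; first by rewrite ft0 mulr0 eqxx.
  by rewrite -Hg p_vanish ?mul0r ?eqxx ?Hf.
have g0 : g = 0 by move/eqP: gf0; rewrite mulf_eq0 (negbTE f_neq0) orbF => /eqP.
by rewrite -Ct0 Hg g0 horner0.
Qed.

Lemma nonvanishing_locus_open_dense (F : 'M[C]_(m, n) -> C) X0 :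
  poly_fun F -> M X0 -> F X0 != 0 ->
  zopen_in M (fun X => M X /\ F X != 0) /\ zdense_in M (fun X => M X /\ F X != 0).
Proof.
move=> polyF MX0 FX0; split.
  have [p Fp] := polyF; exists (eq^~ p) => X; rewrite -Fp.
  split=> -[MX pX]; split=> //; first by move=> /(_ p erefl) /eqP; rewrite (negbTE pX).
  by apply/eqP => pX0; apply: pX => q ->.
move=> S S_vanish X MX q Sq.
apply: (curve_connected_vanish polyF MX0 FX0) => // Y MY FY.
exact: S_vanish.
Qed.

End CurveConnected.

Lemma rank_le_factor (C : fieldType) m n r (X : 'M[C]_(m, n)) : (\rank X <= r)%N ->
  exists (A : 'M[C]_(m, r)) (B : 'M[C]_(r, n)), X = A *m B.
Proof.
move=> rkX; exists (col_ebase X *m pid_mx (\rank X)), (pid_mx r *m row_ebase X).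
rewrite mulmxA -(mulmxA (col_ebase X)) mul_pid_mx.
by rewrite (minn_idPl rkX) (minn_idPr rkX) mulmx_ebase.
Qed.

Lemma rank_mul_le (C : fieldType) m n r (A : 'M[C]_(m, r)) (B : 'M[C]_(r, n)) :
  (\rank (A *m B) <= r)%N.
Proof. exact: leq_trans (mxrankM_maxl _ _) (rank_leq_col _). Qed.

(* The determinantal variety of rank <= r matrices is curve connected:
   interpolate linearly between the factors A0, A1 and B0, B1. *)
Lemma rank_le_curve_connected (C : fieldType) m n r :
  curve_connected (fun X : 'M[C]_(m, n) => (\rank X <= r)%N).
Proof.
move=> X Y /rank_le_factor [A0 [B0 ->]] /rank_le_factor [A1 [B1 ->]].
pose lerp p q (U V : 'M[C]_(p, q)) := \matrix_(i, k) ((U i k)%:P + (V i k - U i k)%:P * 'X).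
have lerpE p q (U V : 'M[C]_(p, q)) t :
    map_mx (horner_eval t) (lerp p q U V) = \matrix_(i, k) (U i k + (V i k - U i k) * t).
  by apply/matrixP => i k; rewrite !mxE /= horner_evalE !hornerE.
have evalM t : map_mx (horner_eval t) (lerp _ _ A0 A1 *m lerp _ _ B0 B1) =
    map_mx (horner_eval t) (lerp _ _ A0 A1) *m map_mx (horner_eval t) (lerp _ _ B0 B1).
  exact: map_mxM.
exists (lerp _ _ A0 A1 *m lerp _ _ B0 B1); split; last by move=> t; rewrite evalM rank_mul_le.
  by rewrite evalM !lerpE; congr (_ *m _); apply/matrixP => i k; rewrite !mxE mulr0 addr0.
by rewrite evalM !lerpE; congr (_ *m _); apply/matrixP => i k; rewrite !mxE mulr1 addrC subrK.
Qed.

Lemma gram_det_rank (C : fieldType) m k (Y : 'M[C]_(m, k)) :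
  \det (Y^T *m Y) != 0 -> \rank Y = k.
Proof.
move=> detY; have gram_unit : Y^T *m Y \in unitmx by rewrite unitmxE unitfE.
apply/eqP; rewrite eqn_leq rank_leq_col /=.
by rewrite -{1}(mxrank_unit gram_unit) mxrankM_maxr.
Qed.

Lemma gram_selection (C : pzRingType) m k (pos : 'I_k -> 'I_m) : injective pos ->
  let Y := \matrix_(i, u) (i == pos u)%:R : 'M[C]_(m, k) in Y^T *m Y = 1%:M.
Proof.
move=> pos_inj Y; apply/matrixP => u v; rewrite !mxE (big_only1 (pos u)) //.
  by rewrite !mxE eqxx mul1r (inj_eq pos_inj).
by move=> i /negbTE iu _; rewrite !mxE iu mul0r.
Qed.

(* lemma3_mx only depends on the values of jj and s (used to pass to finfuns). *)
Lemma lemma3_mx_ext (C : comNzRingType) m n r (X : 'M[C]_(m, n)) j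
    (jj jj' : 'I_r -> 'I_n) (s s' : 'I_r -> 'S_m) :
  jj =1 jj' -> s =1 s' -> lemma3_mx X j jj s = lemma3_mx X j jj' s'.
Proof.
move=> ejj es; rewrite /lemma3_mx; congr row_mx.
by apply/matrixP => i k; rewrite !mxE ejj es.
Qed.

Lemma poly_mx_lemma3 (C : comNzRingType) m n r j (jj : 'I_r -> 'I_n) (s : 'I_r -> 'S_m) :
  poly_mx (fun X : 'M[C]_(m, n) => lemma3_mx X j jj s).
Proof.
move=> i u; case: (split_ordP u) => [v ->|k ->].
  by apply: poly_fun_ext (poly_fun_entry _ i j) _ => X; rewrite row_mxEl mxE.
apply: (poly_fun_ext (F := fun X => \sum_l perm_mx (s k) i l * X l (jj k))).
  by apply: poly_fun_sum => l; apply: poly_fun_mul; [exact: poly_fun_const | exact: poly_fun_entry].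
by move=> X; rewrite row_mxEr !mxE; apply: eq_bigr => l _; rewrite !mxE.
Qed.

Lemma poly_fun_gram_lemma3 (C : comNzRingType) m n r j (jj : 'I_r -> 'I_n)
    (s : 'I_r -> 'S_m) :
  poly_fun (fun X : 'M[C]_(m, n) => \det ((lemma3_mx X j jj s)^T *m lemma3_mx X j jj s)).
Proof. by apply/poly_fun_det/poly_mx_mul; [apply: poly_mx_tr|]; apply: poly_mx_lemma3. Qed.

Lemma perm_positions m r (le_rm : (1 + r <= m)%N) (k0 : 'I_r) (sg : 'S_m) :
  sg != 1%g ->
  exists2 pos : 'I_(1 + r) -> 'I_m,
    injective pos & pos (lshift r ord0) = sg (pos (rshift 1 k0)).
Proof.
move=> sg_neq1; have [a sga] : exists a, sg a != a.
  have : ~~ [forall a, sg a == a].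
    by apply: contra sg_neq1 => /forallP sg_id; apply/eqP/permP => a; rewrite perm1; apply/eqP.
  by rewrite negb_forall => /existsP.
pose w (u : 'I_(1 + r)) := widen_ord le_rm u.
have w_inj : injective w by move=> u v /(congr1 val) /= /val_inj.
pose rho := tperm (w (lshift r ord0)) (sg a).
pose c := rho (w (rshift 1 k0)).
have c_neq : c != sg a.
  rewrite /c -[sg a](tpermL (w (lshift r ord0))) -/rho (inj_eq perm_inj) (inj_eq w_inj).
  by apply/eqP => /(congr1 val).
exists (fun u => (rho * tperm c a)%g (w u)); first by move=> u v /perm_inj /w_inj.
rewrite !permM tpermL tpermD //; last by rewrite eq_sym.
by rewrite -/c tpermL.
Qed.

(* Given such positions, a rank <= r matrix X realises the selection matrix
   with columns e_(pos u) as [x_j  Pi_1 x_{j_1} ... Pi_r x_{j_r}]: column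
   jj k of X is e_(s k (pos (1 + k))) and column j repeats column jj k0. *)
Lemma lemma3_mx_selection (C : fieldType) m n r j (jj : 'I_r -> 'I_n)
    (s : 'I_r -> 'S_m) (k0 : 'I_r) (pos : 'I_(1 + r) -> 'I_m) :
  injective jj -> (forall k, jj k != j) ->
  pos (lshift r ord0) = s k0 (pos (rshift 1 k0)) ->
  exists X : 'M[C]_(m, n),
    (\rank X <= r)%N /\ lemma3_mx X j jj s = \matrix_(i, u) (i == pos u)%:R.
Proof.
move=> jj_inj jj_neq pos0.
pose A : 'M[C]_(m, r) := \matrix_(i, k) (i == s k (pos (rshift 1 k)))%:R.
pose B : 'M[C]_(r, n) := \matrix_(k, l) ((jj k == l) || ((l == j) && (k == k0)))%:R.
have ABj i : (A *m B) i j = A i k0.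
  rewrite mxE (big_only1 k0) // ?mxE ?(negbTE (jj_neq k0)) ?eqxx ?mulr1 // => k k_neq _.
  by rewrite !mxE (negbTE (jj_neq k)) (negbTE k_neq) andbF mulr0.
have ABjj i k : (A *m B) i (jj k) = A i k.
  rewrite mxE (big_only1 k) // ?mxE ?eqxx ?mulr1 // => l l_neq _.
  by rewrite !mxE (inj_eq jj_inj) (negbTE l_neq) (negbTE (jj_neq _)) mulr0.
exists (A *m B); split; first exact: rank_mul_le.
apply/matrixP => i u; case: (split_ordP u) => [v ->|k ->].
  by rewrite row_mxEl mxE ABj !mxE ord1 pos0.
rewrite row_mxEr [in LHS]mxE -row_permE [in LHS]mxE [in LHS]mxE ABjj.
by rewrite !mxE (inj_eq perm_inj).
Qed.

Lemma gram_lemma3_witness (C : fieldType) m n r (hr : (r < minn m n)%N) j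
    (jj : 'I_r -> 'I_n) (s : 'I_r -> 'S_m) :
  injective jj -> (forall k, jj k != j) -> (exists k, s k != 1%g) ->
  exists X : 'M[C]_(m, n),
    (\rank X <= r)%N /\ \det ((lemma3_mx X j jj s)^T *m lemma3_mx X j jj s) != 0.
Proof.
move=> jj_inj jj_neq [k0 sk0_neq1].
have le_rm : (1 + r <= m)%N by move: hr; rewrite leq_min => /andP[].
have [pos pos_inj pos0] := perm_positions le_rm k0 sk0_neq1.
have [X [rkX Y_sel]] := lemma3_mx_selection C jj_inj jj_neq pos0.
by exists X; rewrite Y_sel gram_selection // det1 oner_neq0.
Qed.

Theorem lemma3 (R : realType) (m n r : nat) (hr : (r < minn m n)%N) :
  let M := fun X : 'M[R[i]]_(m, n) => (\rank X <= r)%N in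
  exists U : 'M[R[i]]_(m, n) -> Prop,
    zopen_in M U /\ zdense_in M U /\
    forall X, U X ->
    forall (j : 'I_n) (jj : 'I_r -> 'I_n), injective jj ->
    (forall k, jj k != j) ->
    forall s : 'I_r -> 'S_m, (exists k, perm_mx (s k) <> 1%:M :> 'M[R[i]]_m) ->
      \rank (lemma3_mx X j jj s) = (r + 1)%N.
Proof.
move=> M; have M_curves : curve_connected M := @rank_le_curve_connected _ m n r.
pose T := ('I_n * {ffun 'I_r -> 'I_n} * {ffun 'I_r -> 'S_m})%type.
pose admissible (t : T) :=
  [&& [forall k, t.1.2 k != t.1.1], injectiveb t.1.2 & [exists k, t.2 k != 1%g]].
pose gram (t : T) (X : 'M[R[i]]_(m, n)) :=
 \det ((lemma3_mx X t.1.1 t.1.2 t.2)^T *m lemma3_mx X t.1.1 t.1.2 t.2).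
pose F X := \prod_(t | admissible t) gram t X.
have polyF : poly_fun F by apply: poly_fun_prod => t; apply: poly_fun_gram_lemma3.
have [X0 [MX0 FX0]] : exists X0, M X0 /\ F X0 != 0.
  apply: (curve_connected_prod_neq0 M_curves (X0 := 0)).
  - by rewrite /M mxrank0.
  - by move=> t; apply: poly_fun_gram_lemma3.
  move=> t /and3P[/forallP jj_neq /injectiveP jj_inj /existsP s_neq1].
  exact: gram_lemma3_witness.
have [U_open U_dense] := nonvanishing_locus_open_dense M_curves polyF MX0 FX0.
exists (fun X => M X /\ F X != 0); do 2!split => //.
move=> X [_ FX] j jj jj_inj jj_neq s [k sk_neq1].
pose t : T := (j, finfun jj, finfun s).
have t_adm : admissible t.
  apply/and3P; split; first by apply/forallP => k' /=; rewrite ffunE.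
    by apply/injectiveP => k1 k2 /=; rewrite !ffunE => /jj_inj.
  apply/existsP; exists k => /=; rewrite ffunE.
  by apply: contra_not_neq sk_neq1 => ->; rewrite perm_mx1.
have := prodf_neq0 _ _ FX t t_adm.
rewrite /gram (lemma3_mx_ext X j (ffunE _) (ffunE _)) => /gram_det_rank ->.
exact: addnC.
Qed.
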